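(* Let $(A,\mathrm{d}_A),(B,\mathrm{d}_B),Y,Z,h_A,h_B$ be homotopy data with bimodule structure, and let $(B,m^{\mathrm{ht}}_n)$ be the homotopy transfer $A_\infty$-algebra on $B$. Suppose that $h_A$ satisfies the left-side condition $h_A\circ Z=0$. Then $m^{\mathrm{ht}}_n=0$ for all $n>2$, i.e. $(B,\mathrm{d}_B,m_2^{\mathrm{ht}})$ is a differential graded associative algebra.
   Context: All vector spaces are $\mathbb{Z}$-graded over a field $\Bbbk$ of characteristic zero. Homotopy data with bimodule structure consists of: cochain complexes $(A,\mathrm{d}_A)$, $(B,\mathrm{d}_B)$; degree-$0$ cochain maps $Y\colon A\to B$, $Z\colon B\to A$; degree $-1$ maps $h_A\colon A\to A$, $h_B\colon B\to B$ with $\mathbb{1}_A-Z\circ Y=\mathrm{d}_A h_A+h_A\mathrm{d}_A$ and $\mathbb{1}_B-Y\circ Z=\mathrm{d}_B h_B+h_B\mathrm{d}_B$; such that (1) $(A,\wedge,\mathrm{d}_A)$ is a differential graded associative algebra; (2) $\mathrm{Im}(Z)$ is a subring of $A$ and $B$ is a differential graded bimodule over $\mathrm{Im}(Z)$, with left action $Z(b)\rhd b'$ and right action $b\lhd Z(b')$ satisfying $Z(b)\rhd(Z(b')\rhd b'')=(Z(b)\wedge Z(b'))\rhd b''$, $(b\lhd Z(b'))\lhd Z(b'')=b\lhd(Z(b')\wedge Z(b''))$, and the graded Leibniz rules $\mathrm{d}_B(Z(b)\rhd b')=Z(\mathrm{d}_Bb)\rhd b'+(-1)^{|b|}Z(b)\rhd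 \mathrm{d}_Bb'$, $\mathrm{d}_B(b\lhd Z(b'))=\mathrm{d}_Bb\lhd Z(b')+(-1)^{|b|}b\lhd Z(\mathrm{d}_Bb')$; (3) $Y,Z$ are $\mathrm{Im}(Z)$-bimodule homomorphisms: $Y(Z(b)\wedge a)=Z(b)\rhd Y(a)$, $Y(a\wedge Z(b))=Y(a)\lhd Z(b)$, $Z(Z(b)\rhd b')=Z(b)\wedge Z(b')$, $Z(b\lhd Z(b'))=Z(b)\wedge Z(b')$ for all $a\in A$, $b,b'\in B$. An $A_\infty$-algebra is $(B,\{m_n\}_{n\ge1})$ with $m_n\colon B^{\otimes n}\to B$ of degree $2-n$ satisfying $\sum_{r+s+t=n}(-1)^{r+st}m_{r+t+1}(\mathbb{1}^{\otimes r}\otimes m_s\otimes\mathbb{1}^{\otimes t})=0$ for all $n\ge1$. The homotopy transfer $A_\infty$-algebra $(B,m_n^{\mathrm{ht}})$ is the one given by the homotopy transfer theorem (Kadeishvili) from the dga $A$ via $Y,Z,h_A$: $m_1^{\mathrm{ht}}=\mathrm{d}_B$, $m_2^{\mathrm{ht}}=Y\circ\wedge\circ(Z\otimes Z)$, $m_3^{\mathrm{ht}}(b\otimes b'\otimes b'')=Y\big(Z(b)\wedge h_A(Z(b')\wedge Z(b''))-h_A(Z(b)\wedge Z(b'))\wedge Z(b'')\big)$, and in general $m_n^{\mathrm{ht}}$ is a signed sum over planar binary rooted trees with $n$ leaves of the composite with $Z$ on the leaves, $\wedge$ at the vertices, $h_A$ on internal edges and $Y$ at the root. *)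

From HB Require Import structures.
From mathcomp Require Import all_boot all_order all_algebra.
Set Implicit Arguments. Unset Strict Implicit. Unset Printing Implicit Defensive.
Import Order.TTheory GRing.Theory Num.Theory.
Local Open Scope ring_scope.

(* A Z-graded vector space is modelled by its total space V (an lmodType K)
   together with the family of homogeneous subspaces G i, i : int, such that
   V is the direct sum of the G i. *)
Section Graded.
Variable K : fieldType.

Definition is_lin (U V : lmodType K) (f : U -> V) :=
  forall (a : K) (u v : U), f (a *: u + v) = a *: f u + f v.

Definition is_bilin (U V W : lmodType K) (m : U -> V -> W) :=
  (forall u, is_lin (m u)) /\ (forall v, is_lin (fun u => m u v)).

Record graded (V : lmodType K) (G : int -> {pred V}) : Prop := {
  gr_zero : forall i, 0 \in G i;
  gr_closed : forall i (a : K) u v, u \in G i -> v \in G i -> a *: u + v \in G i;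
  gr_span : forall v : V, exists s : seq (int * V),
      (forall x, x \in s -> x.2 \in G x.1) /\ v = \sum_(x <- s) x.2;
  gr_direct : forall s : seq (int * V), uniq (map fst s) ->
      (forall x, x \in s -> x.2 \in G x.1) -> \sum_(x <- s) x.2 = 0 ->
      forall x, x \in s -> x.2 = 0 }.

Definition has_degree (U V : lmodType K) (GU : int -> {pred U})
  (GV : int -> {pred V}) (k : int) (f : U -> V) :=
  forall i u, u \in GU i -> f u \in GV (i + k).

Definition ksign (i : int) : K := (-1) ^+ (absz i).

Definition is_complex (V : lmodType K) (G : int -> {pred V}) (d : V -> V) :=
  [/\ graded G, is_lin d, has_degree G G 1 d & forall x, d (d x) = 0].

Definition is_dga (V : lmodType K) (G : int -> {pred V}) (d : V -> V)
  (m : V -> V -> V) :=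
  [/\ is_complex G d, is_bilin m,
      (forall i j a b, a \in G i -> b \in G j -> m a b \in G (i + j)),
      (forall a b c, m (m a b) c = m a (m b c)) &
      (forall i a b, a \in G i -> d (m a b) = m (d a) b + ksign i *: m a (d b))].

(* Homotopy data with bimodule structure.
   actl a b' stands for  a |> b'  (used only for a = Z b in Im Z),
   actr b a  stands for  b <| a   (used only for a = Z b' in Im Z). *)
Record homotopy_data_bimod (A B : lmodType K)
  (GA : int -> {pred A}) (GB : int -> {pred B})
  (dA : A -> A) (dB : B -> B) (Y : A -> B) (Z : B -> A)
  (hA : A -> A) (hB : B -> B) (mulA : A -> A -> A)
  (actl : A -> B -> B) (actr : B -> A -> B) : Prop := {
  hd_dgaA : is_dga GA dA mulA;
  hd_cxB : is_complex GB dB;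
  hd_Ylin : is_lin Y; hd_Ydeg : has_degree GA GB 0 Y;
  hd_Ychain : forall a, Y (dA a) = dB (Y a);
  hd_Zlin : is_lin Z; hd_Zdeg : has_degree GB GA 0 Z;
  hd_Zchain : forall b, Z (dB b) = dA (Z b);
  hd_hAlin : is_lin hA; hd_hAdeg : has_degree GA GA (-1) hA;
  hd_hBlin : is_lin hB; hd_hBdeg : has_degree GB GB (-1) hB;
  hd_htA : forall a, a - Z (Y a) = dA (hA a) + hA (dA a);
  hd_htB : forall b, b - Y (Z b) = dB (hB b) + hB (dB b);
  hd_subring : forall b b', exists b'', mulA (Z b) (Z b') = Z b'';
  hd_actl_lin2 : forall b, is_lin (actl (Z b));
  hd_actl_lin1 : forall c, is_lin (fun b => actl (Z b) c);
  hd_actr_lin1 : forall b, is_lin (fun c => actr c (Z b));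
  hd_actr_lin2 : forall c, is_lin (fun b => actr c (Z b));
  hd_actl_deg : forall i j b c, b \in GB i -> c \in GB j -> actl (Z b) c \in GB (i + j);
  hd_actr_deg : forall i j b c, b \in GB i -> c \in GB j -> actr c (Z b) \in GB (j + i);
  hd_actl_assoc : forall b b' b'',
      actl (Z b) (actl (Z b') b'') = actl (mulA (Z b) (Z b')) b'';
  hd_actr_assoc : forall b b' b'',
      actr (actr b (Z b')) (Z b'') = actr b (mulA (Z b') (Z b''));
  hd_act_compat : forall b b' b'',
      actr (actl (Z b) b') (Z b'') = actl (Z b) (actr b' (Z b''));
  hd_actl_leibniz : forall i b b', b \in GB i ->
      dB (actl (Z b) b') = actl (Z (dB b)) b' + ksign i *: actl (Z b) (dB b');
  hd_actr_leibniz : forall i b b', b \in GB i ->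
      dB (actr b (Z b')) = actr (dB b) (Z b') + ksign i *: actr b (Z (dB b'));
  hd_Yl : forall b a, Y (mulA (Z b) a) = actl (Z b) (Y a);
  hd_Yr : forall b a, Y (mulA a (Z b)) = actr (Y a) (Z b);
  hd_Zl : forall b b', Z (actl (Z b) b') = mulA (Z b) (Z b');
  hd_Zr : forall b b', Z (actr b (Z b')) = mulA (Z b) (Z b') }.

End Graded.

Inductive ptree := Leaf | Node of ptree & ptree.

Fixpoint leaves (t : ptree) : nat :=
  match t with Leaf => 1%N | Node l r => (leaves l + leaves r)%N end.

(* all planar binary rooted trees with n leaves (fuel >= n - 1 suffices) *)
Fixpoint ptrees_fuel (fuel n : nat) : seq ptree :=
  match n with
  | 0 => [::]
  | 1 => [:: Leaf]
  | _ => match fuel with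
         | 0 => [::]
         | fuel'.+1 =>
           flatten [seq [seq Node l r | l <- ptrees_fuel fuel' k,
                                        r <- ptrees_fuel fuel' (n - k)]
                   | k <- iota 1 (n - 1)]
         end
  end.

Definition ptrees (n : nat) : seq ptree := ptrees_fuel n n.

Section Transfer.
Variables (K : fieldType) (A B : lmodType K).
Variables (Y : A -> B) (Z : B -> A) (hA : A -> A) (mulA : A -> A -> A).

(* value in A of a tree on inputs bs: Z on leaves, mulA at vertices,
   hA on internal edges (root not included) *)
Fixpoint tree_eval (t : ptree) (bs : seq B) : A :=
  match t with
  | Leaf => Z (head 0 bs)
  | Node l r =>
      let bl := take (leaves l) bs in
      let br := drop (leaves l) bs in
      let el := tree_eval l bl in
      let er := tree_eval r br in
      mulA (if l is Leaf then el else hA el) (if r is Leaf then er else hA er)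
  end.

(* signed sum over planar binary trees with n leaves, Y at the root;
   the sign of tree t (which may depend on the input degrees) is (-1)^(sgn t) *)
Definition mht_signed (sgn : ptree -> bool) (n : nat) (bs : seq B) : B :=
  \sum_(t <- ptrees n) ((-1) ^+ sgn t) *: Y (tree_eval t bs).

Definition m2ht (b b' : B) : B := Y (mulA (Z b) (Z b')).

End Transfer.

(* With h_A Z = 0, every tree value lies in Im Z: leaves are Z b, internal
   edges carry h_A of an element of Im Z, i.e. 0, and Im Z is a subring.
   Hence every tree with more than two leaves has an internal edge carrying
   0, so m_n^ht = 0 for n > 2 whatever the signs.  For m_2^ht, the homotopy relation applied to
   Z b gives Z (Y (Z b)) = Z b, so Z Y is the identity on Im Z; associativity
   and the Leibniz rule of m_2^ht = Y (Z _ * Z _) are then inherited from A. *)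
From HB Require Import structures.
From mathcomp Require Import all_boot all_order all_algebra.
Import Order.TTheory GRing.Theory Num.Theory.
Set Implicit Arguments. Unset Strict Implicit. Unset Printing Implicit Defensive.
Local Open Scope ring_scope.

Section IsLin.
Variables (K : fieldType) (U V : lmodType K) (f : U -> V).
Hypothesis flin : is_lin f.

Lemma is_lin0 : f 0 = 0.
Proof.
have := flin 1 0 0; rewrite !scale1r addr0 => f0.
by apply: (@addIr _ (f 0)); rewrite add0r -f0.
Qed.

Lemma is_linD u v : f (u + v) = f u + f v.
Proof. by have := flin 1 u v; rewrite !scale1r. Qed.

Lemma is_linZ a u : f (a *: u) = a *: f u.
Proof. by have := flin a u 0; rewrite !addr0 is_lin0 addr0. Qed.

End IsLin.

Fixpoint ptree_eqb (t u : ptree) : bool :=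
  match t, u with
  | Leaf, Leaf => true
  | Node l r, Node l' r' => ptree_eqb l l' && ptree_eqb r r'
  | _, _ => false
  end.

Lemma ptree_eqP : Equality.axiom ptree_eqb.
Proof.
elim=> [|l IHl r IHr] [|l' r'] /=; try by constructor.
by apply: (iffP andP) => [[/IHl-> /IHr->]|[<- <-]]; split; [apply/IHl|apply/IHr].
Qed.

HB.instance Definition _ := hasDecEq.Build ptree ptree_eqP.

Lemma ptrees_fuel_leaves fuel n t : t \in ptrees_fuel fuel n -> leaves t = n.
Proof.
elim: fuel n t => [|fuel IH] [|[|n]] t //; try by rewrite inE => /eqP->.
move=> /flatten_mapP[k]; rewrite mem_iota => /andP[_ ltkn].
move=> /allpairsP[[l r] /= [/IH lk /IH rnk ->]] /=; rewrite lk rnk.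
by apply: subnKC; move: ltkn; rewrite add1n subn1 => /ltnW.
Qed.

Section TreeEvalImZ.
Variables (K : fieldType) (A B : lmodType K).
Variables (Z : B -> A) (hA : A -> A) (mulA : A -> A -> A).
Hypothesis Zlin : is_lin Z.
Hypothesis mulA_bilin : is_bilin mulA.
Hypothesis imZ_mul_closed : forall b b', exists b'', mulA (Z b) (Z b') = Z b''.
Hypothesis hA_Z : forall b, hA (Z b) = 0.

Lemma branch_imZ t b : exists c, (if t is Leaf then Z b else hA (Z b)) = Z c.
Proof.
by case: t; [exists b | exists 0; rewrite /= hA_Z (is_lin0 Zlin)].
Qed.

Lemma tree_eval_imZ t bs : exists b, tree_eval Z hA mulA t bs = Z b.
Proof.
elim: t bs => [|l IHl r IHr] bs /=; first by exists (head 0 bs).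
have [bl ->] := IHl (take (leaves l) bs); have [br ->] := IHr (drop (leaves l) bs).
have [cl ->] := branch_imZ l bl; have [cr ->] := branch_imZ r br.
exact: imZ_mul_closed.
Qed.

Lemma tree_eval_eq0 t bs : (2 < leaves t)%N -> tree_eval Z hA mulA t bs = 0.
Proof.
have [mulA_linr mulA_linl] := mulA_bilin.
have mulA0 u : mulA u 0 = 0 by exact: is_lin0 (mulA_linr u).
have mul0A v : mulA 0 v = 0 by have := is_lin0 (mulA_linl v).
have hA_tree u cs : hA (tree_eval Z hA mulA u cs) = 0.
  by have [b ->] := tree_eval_imZ u cs; exact: hA_Z.
case: t => [//|l r] lt_2_lr; rewrite [LHS]/= !hA_tree.
by case: l r lt_2_lr => [|l1 l2] [|r1 r2] //= _; rewrite ?mulA0 ?mul0A.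
Qed.

Lemma mht_signed_eq0 (Y : A -> B) n sgn bs :
  is_lin Y -> (2 < n)%N -> mht_signed Y Z hA mulA sgn n bs = 0.
Proof.
move=> Ylin n_gt2; rewrite /mht_signed big_seq big1 // => t /ptrees_fuel_leaves tn.
by rewrite tree_eval_eq0 ?tn // (is_lin0 Ylin) scaler0.
Qed.

End TreeEvalImZ.

Lemma ZY_id_on_imZ (K : fieldType) (A B : lmodType K) (dA : A -> A) (dB : B -> B)
    (Y : A -> B) (Z : B -> A) (hA : A -> A) :
  is_lin dA -> (forall a, a - Z (Y a) = dA (hA a) + hA (dA a)) ->
  (forall b, Z (dB b) = dA (Z b)) -> (forall b, hA (Z b) = 0) ->
  forall b, Z (Y (Z b)) = Z b.
Proof.
move=> dAlin htA Zchain hA_Z b; apply/esym/eqP; rewrite -subr_eq0.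
by rewrite htA hA_Z (is_lin0 dAlin) -Zchain hA_Z addr0.
Qed.

Section M2htDga.
Variables (K : fieldType) (A B : lmodType K).
Variables (GA : int -> {pred A}) (GB : int -> {pred B}).
Variables (dA : A -> A) (dB : B -> B) (Y : A -> B) (Z : B -> A) (mulA : A -> A -> A).
Hypothesis dgaA : is_dga GA dA mulA.
Hypotheses (Ylin : is_lin Y) (Ydeg : has_degree GA GB 0 Y).
Hypotheses (Zlin : is_lin Z) (Zdeg : has_degree GB GA 0 Z).
Hypothesis Ychain : forall a, Y (dA a) = dB (Y a).
Hypothesis Zchain : forall b, Z (dB b) = dA (Z b).
Hypothesis imZ_mul_closed : forall b b', exists b'', mulA (Z b) (Z b') = Z b''.
Hypothesis ZY_imZ : forall b, Z (Y (Z b)) = Z b.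

Local Notation m2 := (m2ht Y Z mulA).

Lemma m2ht_bilin : is_bilin m2.
Proof.
have [_ [mulA_linr mulA_linl] _ _ _] := dgaA.
split=> [b a u v | v a u w]; rewrite /m2ht (is_linD Zlin) (is_linZ Zlin).
  by rewrite (is_linD (mulA_linr _)) (is_linZ (mulA_linr _)) (is_linD Ylin) (is_linZ Ylin).
have := is_linD (mulA_linl (Z v)) (a *: Z u) (Z w); rewrite /= => ->.
have := is_linZ (mulA_linl (Z v)) a (Z u); rewrite /= => ->.
by rewrite (is_linD Ylin) (is_linZ Ylin).
Qed.

Lemma m2ht_degree i j b b' : b \in GB i -> b' \in GB j -> m2 b b' \in GB (i + j).
Proof.
have [_ _ mulA_deg _ _] := dgaA.
move=> /Zdeg Zb /Zdeg Zb'; rewrite !addr0 in Zb Zb'.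
by have := Ydeg (mulA_deg _ _ _ _ Zb Zb'); rewrite addr0.
Qed.

Lemma m2htA b b' b'' : m2 (m2 b b') b'' = m2 b (m2 b' b'').
Proof.
have [_ _ _ mulAA _] := dgaA.
have [c Zc] := imZ_mul_closed b b'; have [c' Zc'] := imZ_mul_closed b' b''.
by rewrite /m2ht Zc ZY_imZ -Zc mulAA Zc' ZY_imZ.
Qed.

Lemma m2ht_leibniz i b b' : b \in GB i ->
  dB (m2 b b') = m2 (dB b) b' + ksign K i *: m2 b (dB b').
Proof.
have [_ _ _ _ mulA_leibniz] := dgaA.
move=> /Zdeg; rewrite addr0 => Zb.
by rewrite /m2ht -Ychain (mulA_leibniz _ _ _ Zb) !Zchain (is_linD Ylin) (is_linZ Ylin).
Qed.

Lemma m2ht_dga : is_complex GB dB -> is_dga GB dB m2.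
Proof.
by move=> cxB; split; [| exact: m2ht_bilin | exact: m2ht_degree | exact: m2htA
  | exact: m2ht_leibniz].
Qed.

End M2htDga.

Theorem proposition2p4 (K : fieldType) (charK0 : [pchar K] =i pred0)
  (A B : lmodType K) (GA : int -> {pred A}) (GB : int -> {pred B})
  (dA : A -> A) (dB : B -> B) (Y : A -> B) (Z : B -> A)
  (hA : A -> A) (hB : B -> B) (mulA : A -> A -> A)
  (actl : A -> B -> B) (actr : B -> A -> B) :
  homotopy_data_bimod GA GB dA dB Y Z hA hB mulA actl actr ->
  (forall b, hA (Z b) = 0) ->
  (forall (n : nat), (2 < n)%N -> forall (sgn : ptree -> bool) (bs : seq B),
      size bs = n -> mht_signed Y Z hA mulA sgn n bs = 0)
  /\ is_dga GB dB (m2ht Y Z mulA).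
Proof.
move=> HD hA_Z.
have dgaA := hd_dgaA HD; have [[_ dAlin _ _] mulA_bilin _ _ _] := dgaA.
split=> [n n_gt2 sgn bs _ | ].
  exact (mht_signed_eq0 (hd_Zlin HD) mulA_bilin (hd_subring HD) hA_Z sgn bs
    (hd_Ylin HD) n_gt2).
have ZY_imZ := ZY_id_on_imZ dAlin (hd_htA HD) (hd_Zchain HD) hA_Z.
exact: m2ht_dga dgaA (hd_Ylin HD) (hd_Ydeg HD) (hd_Zlin HD) (hd_Zdeg HD)
  (hd_Ychain HD) (hd_Zchain HD) (hd_subring HD) ZY_imZ (hd_cxB HD).
Qed.
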